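(* \begin{enumerate} \item For the 4-taxon tree $T_{ab|cd}$ and the 2-state GM+I model, suppose $P=\phi_T(\mathbf s)$. Then generically the parameters in $\mathbf s$ related to invariable sites can be recovered from $P$ by the following formulas: $$\delta=\frac {|A_1|+|A_2|}{|B|},\ \ \boldsymbol \pi_I=\frac 1{|A_1|+|A_2|} \left ( |A_1|,|A_2|\right ),$$ where $B=\begin{pmatrix} p_{1212} & p_{1221} \\ p_{2112} & p_{2121} \end{pmatrix}$, $$A_1=\begin{pmatrix} p_{1111} & p_{1112} & p_{1121}\\ p_{1211} & p_{1212} & p_{1221}\\ p_{2111} & p_{2112} & p_{2121} \end{pmatrix}, \ \ A_2=\begin{pmatrix} p_{1212} & p_{1221} & p_{1222}\\ p_{2112} & p_{2121} & p_{2122}\\ p_{2212} & p_{2221} & p_{2222} \end{pmatrix}.$$ \item More generally, for the $\kappa$-state GM+I model on $T_{ab|cd}$, the invariable site parameters can be recovered from a generic point in the image of the parameterization map by rational formulas of the form $$\delta=\frac {\sum_{i\in[\kappa]}|A_i|}{|B|}, \ \ \boldsymbol \pi_I=\frac 1{\sum_{i\in[\kappa]} |A_i|} \left ( |A_1|,|A_2|,\dots, |A_\kappa|\right ).$$ Here $|B|$ is any $\kappa \times \kappa$ minor of $F_{ab|cd}$ that omits all rows and columns indexed by $ii$, and $|A_i|$ is the $(\kappa+1)\times(\kappa+1)$ minor obtained by including all rows and columns chosen for $B$ and in addition the $ii$ row and $ii$ column. \end{enumerate}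
   Context: The $\kappa$-state general Markov plus invariable sites (GM+I) model on a tree $T$: with probability $\delta$ (class size parameter) a site is invariable and is assigned state $i\in[\kappa]=\{1,\dots,\kappa\}$ with probability $\pi_I(i)$, where $\boldsymbol\pi_I=(\pi_I(1),\dots,\pi_I(\kappa))$; otherwise the site evolves under the general Markov (GM) model on $T$ (a root distribution $\boldsymbol\pi_{GM}$ and a $\kappa\times\kappa$ Markov matrix $M_e$ on each edge). The parameterization map $\phi_T$ sends parameters $\mathbf s$ to the joint distribution $P$ of states at the leaves, so $P=(1-\delta)P_{GM}+\delta\,\operatorname{diag}(\boldsymbol\pi_I)$ where $P_{GM}$ is a GM joint distribution on $T$ and $\operatorname{diag}(\boldsymbol\pi_I)$ is the array with $\pi_I(i)$ at entry $(i,i,\dots,i)$ and zeros elsewhere. $T_{ab|cd}$ is the binary 4-taxon tree whose internal edge induces the split $ab|cd$; pattern frequencies are $p_{ijkl}=P(i,j,k,l)$, indexed by the states at leaves $a,b,c,d$. The flattening $F_{ab|cd}$ is the $\kappa^2\times\kappa^2$ matrix with rows indexed by the states $ij$ at $(a,b)$, columns indexed by the states $kl$ at $(c,d)$, and $(ij,kl)$ entry $p_{ijkl}$. `Generically' means for all parameters outside a proper algebraic subvariety of the parameter space. *)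

From HB Require Import structures.
From mathcomp Require Import all_boot all_order all_algebra.
From mathcomp Require Import mpoly.
Set Implicit Arguments. Unset Strict Implicit. Unset Printing Implicit Defensive.
Import Order.TTheory GRing.Theory Num.Theory.
Local Open Scope ring_scope.

(* Edges of T_{ab|cd} are indexed by 'I_5:                                 *)
(*   0 = pendant edge to a,  1 = pendant edge to b,                         *)
(*   2 = internal edge (u -> v),                                            *)
(*   3 = pendant edge to c,  4 = pendant edge to d,                         *)
(* where u is the internal node adjacent to a,b (taken as the root) and v  *)
(* the internal node adjacent to c,d.                                       *)

Definition pidx (k : nat) : finType :=
  (unit + 'I_k + 'I_k + ('I_5 * 'I_k * 'I_k))%type.

Section Model.
Variables (R : realFieldType) (k : nat).

Definition param := pidx k -> R.

Definition delta (s : param) : R := s (inl (inl (inl tt))).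
Definition piI (s : param) (i : 'I_k) : R := s (inl (inl (inr i))).
Definition piGM (s : param) (i : 'I_k) : R := s (inl (inr i)).
(* entry (x,y) of the Markov matrix M_e : transition from state x to y *)
Definition Mk (s : param) (e : 'I_5) (x y : 'I_k) : R := s (inr (e, x, y)).

Definition is_prob_vector (v : 'I_k -> R) : Prop :=
  (forall i, 0 <= v i) /\ \sum_i v i = 1.

Definition is_markov (M : 'I_k -> 'I_k -> R) : Prop :=
  (forall x y, 0 <= M x y) /\ (forall x, \sum_y M x y = 1).

Definition param_space (s : param) : Prop :=
  [/\ 0 <= delta s <= 1, is_prob_vector (piI s), is_prob_vector (piGM s)
    & forall e, is_markov (Mk s e)].

Definition PGM (s : param) (i j l m : 'I_k) : R :=
  \sum_(x < k) \sum_(y < k)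
     piGM s x * Mk s 0 x i * Mk s 1 x j * Mk s 2 x y * Mk s 3 y l * Mk s 4 y m.

Definition phiT (s : param) (i j l m : 'I_k) : R :=
  (1 - delta s) * PGM s i j l m
  + delta s * (if [&& i == j, j == l & l == m] then piI s i else 0).

Definition flattening (s : param) (u w : 'I_k * 'I_k) : R :=
  phiT s u.1 u.2 w.1 w.2.

Definition coords (s : param) : 'I_#|pidx k| -> R := fun n => s (enum_val n).

Definition generically (Prop_s : param -> Prop) : Prop :=
  exists Q : {mpoly R[#|pidx k|]},
    (exists s0, param_space s0 /\ Q.@[coords s0] != 0) /\
    (forall s, param_space s -> Q.@[coords s] != 0 -> Prop_s s).

Definition Bmx (s : param) (r c : 'I_k -> 'I_k * 'I_k) : 'M[R]_k :=
  \matrix_(p, q) flattening s (r p) (c q).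

(* rows/columns of A_i : the index ii, followed by the rows (columns) of B *)
Definition ext_idx (i : 'I_k) (r : 'I_k -> 'I_k * 'I_k) (p : 'I_k.+1)
  : 'I_k * 'I_k :=
  match unlift ord0 p with None => (i, i) | Some p' => r p' end.

Definition Amx (s : param) (r c : 'I_k -> 'I_k * 'I_k) (i : 'I_k)
  : 'M[R]_k.+1 :=
  \matrix_(p, q) flattening s (ext_idx i r p) (ext_idx i c q).

End Model.

Definition st1 : 'I_2 := ord0.
Definition st2 : 'I_2 := ord_max.

Definition mx_of_seqs (R : ringType) (m n : nat) (L : seq (seq R)) : 'M[R]_(m, n) :=
  \matrix_(p < m, q < n) nth 0 (nth [::] L p) q.

Section Part1.
Variable R : realFieldType.
Variable s : param R 2.
Local Notation p := (phiT s).

Definition B2 : 'M[R]_2 := mx_of_seqs 2 2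
  [:: [:: p st1 st2 st1 st2; p st1 st2 st2 st1];
      [:: p st2 st1 st1 st2; p st2 st1 st2 st1]].

Definition A2_1 : 'M[R]_3 := mx_of_seqs 3 3
  [:: [:: p st1 st1 st1 st1; p st1 st1 st1 st2; p st1 st1 st2 st1];
      [:: p st1 st2 st1 st1; p st1 st2 st1 st2; p st1 st2 st2 st1];
      [:: p st2 st1 st1 st1; p st2 st1 st1 st2; p st2 st1 st2 st1]].

Definition A2_2 : 'M[R]_3 := mx_of_seqs 3 3
  [:: [:: p st1 st2 st1 st2; p st1 st2 st2 st1; p st1 st2 st2 st2];
      [:: p st2 st1 st1 st2; p st2 st1 st2 st1; p st2 st1 st2 st2];
      [:: p st2 st2 st1 st2; p st2 st2 st2 st1; p st2 st2 st2 st2]].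
End Part1.

(** The GM part of the flattening factors through the [kappa] states of the
    root, so all its minors of order [kappa + 1] vanish.  The invariable sites
    add [delta pi_I(i)] to the single entry [(ii, ii)]; expanding [|A_i|] along
    that entry therefore leaves only [delta pi_I(i) |B|], because the rows and
    columns of [B] avoid the diagonal states.  Summing over [i] gives
    [sum_i |A_i| = delta |B|], and the formulas follow wherever
    [delta |B| <> 0].  This product is a polynomial in the parameters, and it is
    nonzero at a point where every edge moves the states deterministically. *)

From HB Require Import structures.
From mathcomp Require Import all_boot all_order all_algebra.
From mathcomp Require Import mpoly.
From mathcomp Require Import ring.
Set Implicit Arguments. Unset Strict Implicit. Unset Printing Implicit Defensive.
Import Order.TTheory GRing.Theory Num.Theory.
Local Open Scope ring_scope.

Lemma det_add_scale_delta (R : comPzRingType) n (A : 'M[R]_n.+1) t a :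
  \det (A + a *: delta_mx t t) = \det A + a * cofactor A t t.
Proof.
rewrite (expand_det_row _ t) (expand_det_row A t).
have cofE j : cofactor (A + a *: delta_mx t t) t j = cofactor A t j.
  rewrite /cofactor; congr (_ * \det _); apply/matrixP => p q.
  by rewrite !mxE eq_sym (negbTE (neq_lift t p)) mulr0 addr0.
under eq_bigr do rewrite cofE !mxE.
rewrite (bigD1 t) //= (bigD1 t (P := predT)) //= !eqxx mulr1 mulrDl [RHS]addrAC.
congr (_ + _); apply: eq_bigr => j /negbTE njt.
by rewrite njt mulr0 addr0.
Qed.

Lemma det_mulmx_narrow (F : fieldType) n (U : 'M[F]_(n.+1, n)) (W : 'M_(n, n.+1)) :
  \det (U *m W) = 0.
Proof.
apply/eqP; apply: contraT; rewrite -unitfE -unitmxE => /mxrank_unit rankUW.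
by have := leq_trans (mxrankM_maxl U W) (rank_leq_col U); rewrite rankUW ltnn.
Qed.

Lemma recover_from_proportional_minors (F : fieldType) (I : finType)
    (d dB : F) (pi dA : I -> F) :
  \sum_i pi i = 1 -> d != 0 -> dB != 0 -> (forall i, dA i = d * pi i * dB) ->
  [/\ \sum_i dA i != 0, d = (\sum_i dA i) / dB
    & forall i, pi i = dA i / \sum_j dA j].
Proof.
move=> pi1 d0 dB0 dAE.
have sumE : \sum_i dA i = d * dB.
  by under eq_bigr do rewrite dAE; rewrite -big_distrl -big_distrr /= pi1 mulr1.
rewrite sumE mulfK //; split=> // [|i]; first exact: mulf_neq0.
by rewrite dAE; field; rewrite dB0 d0.
Qed.

Section Flattening.
Variables (R : realFieldType) (k : nat) (s : param R k).

Definition flatteningGM n m (rho : 'I_n -> 'I_k * 'I_k) (gam : 'I_m -> 'I_k * 'I_k)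
  : 'M[R]_(n, m) :=
  \matrix_(p, q) ((1 - delta s) * PGM s (rho p).1 (rho p).2 (gam q).1 (gam q).2).

Lemma det_flatteningGM (rho gam : 'I_k.+1 -> 'I_k * 'I_k) :
  \det (flatteningGM rho gam) = 0.
Proof.
pose U : 'M[R]_(k.+1, k) := \matrix_(p, x)
  ((1 - delta s) * (piGM s x * Mk s 0 x (rho p).1 * Mk s 1 x (rho p).2)).
pose W : 'M[R]_(k, k.+1) := \matrix_(x, q)
  (\sum_(y < k) Mk s 2 x y * Mk s 3 y (gam q).1 * Mk s 4 y (gam q).2).
suff -> : flatteningGM rho gam = U *m W by apply: det_mulmx_narrow.
apply/matrixP => p q; rewrite !mxE /PGM big_distrr; apply: eq_bigr => x _.
rewrite !mxE !big_distrr; apply: eq_bigr => y _ /=; ring.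
Qed.

Lemma flattening_offdiag_row (u w : 'I_k * 'I_k) : u.1 != u.2 ->
  flattening s u w = (1 - delta s) * PGM s u.1 u.2 w.1 w.2.
Proof. by rewrite /flattening /phiT => /negbTE->; rewrite mulr0 addr0. Qed.

Lemma flattening_offdiag_col (u w : 'I_k * 'I_k) : w.1 != w.2 ->
  flattening s u w = (1 - delta s) * PGM s u.1 u.2 w.1 w.2.
Proof.
rewrite /flattening /phiT => /negbTE w12.
by case: eqP => [->|]; rewrite /= ?w12 ?andbF mulr0 addr0.
Qed.

Definition ext_at (t : 'I_k.+1) (i : 'I_k) (r : 'I_k -> 'I_k * 'I_k) (p : 'I_k.+1) :=
  match unlift t p with None => (i, i) | Some p' => r p' end.

Lemma ext_at_lift t i r p : ext_at t i r (lift t p) = r p.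
Proof. by rewrite /ext_at liftK. Qed.

Lemma ext_at_offdiag t i r p : (forall p, (r p).1 != (r p).2) -> p != t ->
  (ext_at t i r p).1 != (ext_at t i r p).2.
Proof.
by move=> roff; case: (unliftP t p) => [p' ->|->]; rewrite ?eqxx ?ext_at_lift.
Qed.

Variables (r c : 'I_k -> 'I_k * 'I_k).
Hypotheses (roff : forall p, (r p).1 != (r p).2) (coff : forall q, (c q).1 != (c q).2).

Lemma det_flattening_ext_at t i :
  \det (\matrix_(p, q) flattening s (ext_at t i r p) (ext_at t i c q)) =
  delta s * piI s i * \det (Bmx s r c).
Proof.
set rho := ext_at t i r; set gam := ext_at t i c.
have -> : \matrix_(p, q) flattening s (rho p) (gam q) =
    flatteningGM rho gam + (delta s * piI s i) *: delta_mx t t.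
  apply/matrixP => p q; rewrite !mxE.
  have [{p}->|pt] := eqVneq p t; last first.
    by rewrite flattening_offdiag_row ?ext_at_offdiag // mulr0 addr0.
  have [{q}->|qt] := eqVneq q t; last first.
    by rewrite flattening_offdiag_col ?ext_at_offdiag // mulr0 addr0.
  by rewrite /rho /gam /ext_at unlift_none /flattening /phiT /= !eqxx mulr1.
rewrite det_add_scale_delta det_flatteningGM add0r /cofactor addnn.
rewrite -signr_odd odd_double expr0 mul1r; congr (_ * \det _).
by apply/matrixP => p q; rewrite !mxE /rho /gam !ext_at_lift flattening_offdiag_row.
Qed.

(* [Amx] is the case [t = ord0]: [ext_idx] is [ext_at ord0]. *)
Lemma det_Amx i : \det (Amx s r c i) = delta s * piI s i * \det (Bmx s r c).
Proof. exact: det_flattening_ext_at. Qed.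

Lemma recover_invariable_params :
  is_prob_vector (piI s) -> delta s != 0 -> \det (Bmx s r c) != 0 ->
  let dB := \det (Bmx s r c) in
  let dA := fun i => \det (Amx s r c i) in
  [/\ dB != 0, \sum_i dA i != 0,
      delta s = (\sum_i dA i) / dB
    & forall i, piI s i = dA i / \sum_j dA j].
Proof.
move=> [_ pi1] d0 dB0 /=.
by have [] := recover_from_proportional_minors pi1 d0 dB0 det_Amx.
Qed.

End Flattening.

Section Polynomials.
Variables (R : realFieldType) (k : nat).
Local Notation N := #|pidx k|.

Definition coordX (z : pidx k) : {mpoly R[N]} := 'X_(enum_rank z).

Definition deltaX := coordX (inl (inl (inl tt))).

Definition PGMX (i j l m : 'I_k) : {mpoly R[N]} :=
  \sum_(x < k) \sum_(y < k)
     coordX (inl (inr x)) * coordX (inr (0, x, i)) * coordX (inr (1, x, j))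
     * coordX (inr (2, x, y)) * coordX (inr (3, y, l)) * coordX (inr (4, y, m)).

Definition phiTX (i j l m : 'I_k) : {mpoly R[N]} :=
  (1 - deltaX) * PGMX i j l m
  + deltaX * (if [&& i == j, j == l & l == m] then coordX (inl (inl (inr i))) else 0).

Definition BmxX (r c : 'I_k -> 'I_k * 'I_k) : 'M[{mpoly R[N]}]_k :=
  \matrix_(p, q) phiTX (r p).1 (r p).2 (c q).1 (c q).2.

Lemma meval_coordX (s : param R k) z : (coordX z).@[coords s] = s z.
Proof. by rewrite /coordX mevalXU /coords enum_rankK. Qed.

Lemma meval_PGMX (s : param R k) i j l m : (PGMX i j l m).@[coords s] = PGM s i j l m.
Proof.
rewrite rmorph_sum; apply: eq_bigr => x _; rewrite rmorph_sum; apply: eq_bigr => y _.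
by rewrite !rmorphM /= !meval_coordX.
Qed.

Lemma meval_phiTX (s : param R k) i j l m : (phiTX i j l m).@[coords s] = phiT s i j l m.
Proof.
rewrite /phiTX /phiT; case: ifP => _;
  by rewrite rmorphD !rmorphM rmorphB rmorph1 ?rmorph0 /= meval_PGMX /deltaX
       !meval_coordX.
Qed.

Definition genericity_polyX (r c : 'I_k -> 'I_k * 'I_k) := deltaX * \det (BmxX r c).

Lemma meval_genericity_polyX (r c : 'I_k -> 'I_k * 'I_k) (s : param R k) :
  (genericity_polyX r c).@[coords s] = delta s * \det (Bmx s r c).
Proof.
rewrite rmorphM /= meval_coordX -det_map_mx; congr (_ * \det _).
by apply/matrixP => p q; rewrite !mxE; apply: meval_phiTX.
Qed.

End Polynomials.

Section DeterministicPoint.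
Variables (R : realFieldType) (k : nat) (r c : 'I_k -> 'I_k * 'I_k).
Hypotheses (k_gt0 : (0 < k)%N) (r_inj : injective r) (c_inj : injective c)
  (roff : forall p, (r p).1 != (r p).2).

Lemma is_prob_vector_uniform : is_prob_vector (fun _ : 'I_k => k%:R^-1 : R).
Proof.
split=> [i|]; first by rewrite invr_ge0 ler0n.
by rewrite sumr_const card_ord -[X in X = 1]mulr_natl mulfV // pnatr_eq0 -lt0n.
Qed.

Lemma is_markov_deterministic (f : 'I_k -> 'I_k) :
  is_markov (fun x y => (y == f x)%:R : R).
Proof.
split=> [x y|x]; first exact: ler0n.
by rewrite (bigD1 (f x)) //= eqxx big1 ?addr0 // => y /negbTE->.
Qed.

(* Edge [e] sends the state [x] of its upper node to [edge_map e x], so a root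
   in state [x] shows [r x] at [a, b] and [c x] at [c, d]; as [r] and [c] are
   injective, [B] is then a nonzero scalar matrix. *)
Definition edge_map (e : 'I_5) (x : 'I_k) : 'I_k :=
  match nat_of_ord e with
  | 0 => (r x).1 | 1 => (r x).2 | 2 => x | 3 => (c x).1 | _ => (c x).2
  end.

Definition deterministic_point : param R k := fun z =>
  match z with
  | inl (inl (inl _)) => 2^-1
  | inl (inl (inr _)) | inl (inr _) => k%:R^-1
  | inr (e, x, y) => (y == edge_map e x)%:R
  end.

Local Notation s0 := deterministic_point.

Lemma deterministic_point_in_space : param_space s0.
Proof.
split; [|exact: is_prob_vector_uniform|exact: is_prob_vector_uniform|].
- by rewrite /delta /= invr_ge0 ler0n invf_le1 ?ltr0n ?ler1n.
- by move=> e; apply: is_markov_deterministic.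
Qed.

Lemma PGM_deterministic_point p q :
  PGM s0 (r p).1 (r p).2 (c q).1 (c q).2 = k%:R^-1 * (p == q)%:R.
Proof.
have pairE (u w : 'I_k * 'I_k) : (u.1 == w.1)%:R * (u.2 == w.2)%:R = (u == w)%:R :> R.
  by case: u w => u1 u2 [w1 w2]; rewrite -natrM mulnb xpair_eqE.
transitivity (\sum_(x < k) k%:R^-1 * ((r p == r x)%:R * (c q == c x)%:R) : R).
  apply: eq_bigr => x _; rewrite (bigD1 x) //= big1 ?addr0 => [|y yx]; last first.
    by rewrite /Mk /= /edge_map /= (negbTE yx) mulr0 !mul0r.
  by rewrite /Mk /= /edge_map /= eqxx mulr1 -!pairE /piGM /=; ring.
rewrite (bigD1 p) //= big1 ?addr0 => [|x xp]; last first.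
  by rewrite (inj_eq r_inj) eq_sym (negbTE xp) mul0r mulr0.
by rewrite (inj_eq r_inj) (inj_eq c_inj) eqxx mul1r eq_sym.
Qed.

Lemma genericity_polyX_deterministic_point :
  (genericity_polyX R r c).@[coords s0] != 0.
Proof.
have half : 1 - 2^-1 = 2^-1 :> R by field.
rewrite meval_genericity_polyX.
have -> : Bmx s0 r c = (2^-1 * k%:R^-1)%:M.
  apply/matrixP => p q; rewrite !mxE flattening_offdiag_row //=.
  by rewrite PGM_deterministic_point /delta /= half mulrA mulr_natr.
by rewrite det_scalar /delta /= !(mulf_neq0, expf_neq0, invr_eq0) ?pnatr_eq0 -?lt0n.
Qed.

End DeterministicPoint.

Lemma generically_recover_invariable_params (R : realFieldType) k
    (r c : 'I_k -> 'I_k * 'I_k) :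
  (0 < k)%N -> injective r -> injective c ->
  (forall p, (r p).1 != (r p).2) -> (forall q, (c q).1 != (c q).2) ->
  generically (fun s : param R k =>
     let dB := \det (Bmx s r c) in
     let dA := fun i => \det (Amx s r c i) in
     [/\ dB != 0, \sum_i dA i != 0,
         delta s = (\sum_i dA i) / dB
       & forall i, piI s i = dA i / \sum_j dA j]).
Proof.
move=> k_gt0 r_inj c_inj roff coff; exists (genericity_polyX R r c); split.
  exists (deterministic_point R r c); split.
    exact: deterministic_point_in_space.
  exact: genericity_polyX_deterministic_point.
move=> s [_ piI_prob _ _]; rewrite meval_genericity_polyX mulf_eq0 negb_or.
by case/andP=> d0 dB0; apply: recover_invariable_params.
Qed.

Definition B2_idx (p : 'I_2) : 'I_2 * 'I_2 := if p == st1 then (st1, st2) else (st2, st1).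

Lemma ord2P (p : 'I_2) : p = st1 \/ p = st2.
Proof. by case: p => [[|[|//]] ?]; [left|right]; apply/val_inj. Qed.

Lemma B2_idx_inj : injective B2_idx.
Proof. by move=> p q; case: (ord2P p) => ->; case: (ord2P q) => ->. Qed.

Lemma B2_idx_offdiag p : (B2_idx p).1 != (B2_idx p).2.
Proof. by case: (ord2P p) => ->. Qed.

Lemma sum_ord2 (R : zmodType) (F : 'I_2 -> R) : \sum_i F i = F st1 + F st2.
Proof. by rewrite big_ord_recl big_ord1; congr (_ + F _); apply: val_inj. Qed.

Section TwoStates.
Variables (R : realFieldType) (s : param R 2).

Lemma B2E : B2 s = Bmx s B2_idx B2_idx.
Proof.
by apply/matrixP => p q; rewrite !mxE; case: (ord2P p) => ->; case: (ord2P q) => ->.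
Qed.

Lemma A2_1E : A2_1 s = Amx s B2_idx B2_idx st1.
Proof.
apply/matrixP => p q; rewrite !mxE /ext_idx.
case: (unliftP ord0 p) => [p' ->|->]; case: (unliftP ord0 q) => [q' ->|->];
  rewrite ?liftK ?unlift_none //;
  by do ?[case: (ord2P p') => ->]; do ?[case: (ord2P q') => ->].
Qed.

Lemma A2_2E : A2_2 s =
  \matrix_(p, q) flattening s (ext_at ord_max st2 B2_idx p) (ext_at ord_max st2 B2_idx q).
Proof.
apply/matrixP => p q; rewrite !mxE /ext_at.
case: (unliftP ord_max p) => [p' ->|->]; case: (unliftP ord_max q) => [q' ->|->];
  rewrite ?liftK ?unlift_none //;
  by do ?[case: (ord2P p') => ->]; do ?[case: (ord2P q') => ->].
Qed.

Lemma det_A2_2 : \det (A2_2 s) = \det (Amx s B2_idx B2_idx st2).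
Proof. by rewrite A2_2E det_flattening_ext_at ?det_Amx //; apply: B2_idx_offdiag. Qed.

End TwoStates.

Theorem proposition12 (R : realFieldType) :
  (* part 1: kappa = 2, explicit formulas *)
  generically (fun s : param R 2 =>
     let dB := \det (B2 s) in
     let dA1 := \det (A2_1 s) in
     let dA2 := \det (A2_2 s) in
     [/\ dB != 0, dA1 + dA2 != 0,
         delta s = (dA1 + dA2) / dB,
         piI s st1 = dA1 / (dA1 + dA2)
       & piI s st2 = dA2 / (dA1 + dA2)])
  /\
  (* part 2: general kappa, any kappa x kappa minor B avoiding rows/cols ii *)
  (forall (k : nat) (r c : 'I_k -> 'I_k * 'I_k),
     (0 < k)%N ->
     injective r -> injective c ->
     (forall p, (r p).1 != (r p).2) -> (forall q, (c q).1 != (c q).2) ->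
     generically (fun s : param R k =>
        let dB := \det (Bmx s r c) in
        let dA := fun i => \det (Amx s r c i) in
        [/\ dB != 0, \sum_i dA i != 0,
            delta s = (\sum_i dA i) / dB
          & forall i, piI s i = dA i / \sum_j dA j])).
Proof.
have part2 := @generically_recover_invariable_params R.
split; last exact: part2.
have [Q [Q_nz recover]] :=
  part2 2 B2_idx B2_idx isT B2_idx_inj B2_idx_inj B2_idx_offdiag B2_idx_offdiag.
exists Q; split=> // s s_space Q_s /=.
have := recover s s_space Q_s; rewrite /= sum_ord2 B2E A2_1E det_A2_2.
by case=> dB0 sum0 deltaE piE; split; rewrite ?piE.
Qed.
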